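(* Let $X$ be a topological space and $Y$ be a metrizable, connected and locally arcwise connected space. Then $\Sigma_0^{f*}(X,Y)\subseteq \mathrm{B}_1(X,Y)$.
   Context: Functionally closed/open sets: zero sets of continuous functions $X\to[0,1]$, resp. their complements. A family $(A_i:i\in I)$ of subsets of $X$ is strongly functionally discrete (sfd) if there is a discrete family $(U_i:i\in I)$ of functionally open sets with $\overline{A_i}\subseteq U_i$ for all $i$; $\sigma$-sfd means a countable union of sfd families. A family $\mathcal B$ is a base for $f:X\to Y$ if each $f^{-1}(V)$, $V\subseteq Y$ open, is a union of members of $\mathcal B$. $\Sigma^{f*}_0(X,Y)$: mappings $f:X\to Y$ having a $\sigma$-sfd base consisting of functionally closed subsets of $X$. $\mathrm{B}_1(X,Y)$: pointwise limits of sequences of continuous mappings $X\to Y$. *)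

From Stdlib Require Import Reals.
Open Scope R_scope.

Record topology (X : Type) := Topology {
  open : (X -> Prop) -> Prop;
  open_full : open (fun _ => True);
  open_inter : forall U V, open U -> open V -> open (fun x => U x /\ V x);
  open_union : forall F : (X -> Prop) -> Prop,
      (forall U, F U -> open U) -> open (fun x => exists U, F U /\ U x)
}.
Arguments open {X} t U.

Definition subset {X : Type} (A B : X -> Prop) : Prop := forall x, A x -> B x.

Definition closure {X : Type} (tX : topology X) (A : X -> Prop) : X -> Prop :=
  fun x => forall U, open tX U -> U x -> exists y, U y /\ A y.

Definition continuous {X Y : Type} (tX : topology X) (tY : topology Y)
  (f : X -> Y) : Prop :=
  forall V, open tY V -> open tX (fun x => V (f x)).

Definition continuous_R {X : Type} (tX : topology X) (g : X -> R) : Prop :=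
  forall x eps, 0 < eps ->
    exists U, open tX U /\ U x /\ forall y, U y -> Rabs (g y - g x) < eps.

Definition functionally_closed {X : Type} (tX : topology X) (A : X -> Prop) : Prop :=
  exists g : X -> R, continuous_R tX g /\ (forall x, 0 <= g x <= 1) /\
    (forall x, A x <-> g x = 0).

Definition functionally_open {X : Type} (tX : topology X) (U : X -> Prop) : Prop :=
  functionally_closed tX (fun x => ~ U x).

Definition discrete_family {X : Type} (tX : topology X) {I : Type}
  (U : I -> X -> Prop) : Prop :=
  forall x, exists W, open tX W /\ W x /\
    forall i j, (exists y, W y /\ U i y) -> (exists y, W y /\ U j y) -> i = j.

Definition sfd {X : Type} (tX : topology X) {I : Type} (A : I -> X -> Prop) : Prop :=
  exists U : I -> X -> Prop,
    (forall i, functionally_open tX (U i)) /\ discrete_family tX U /\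
    (forall i, subset (closure tX (A i)) (U i)).

Definition sigma_sfd {X : Type} (tX : topology X) {I : Type} (A : I -> X -> Prop) : Prop :=
  exists J : nat -> I -> Prop,
    (forall i, exists n, J n i) /\
    (forall n, sfd tX (fun p : {i : I | J n i} => A (proj1_sig p))).

Definition base_for {X Y : Type} (tY : topology Y) {I : Type}
  (A : I -> X -> Prop) (f : X -> Y) : Prop :=
  forall V, open tY V ->
    exists K : I -> Prop, forall x, V (f x) <-> exists i, K i /\ A i x.

Definition Sigma0fstar {X Y : Type} (tX : topology X) (tY : topology Y)
  (f : X -> Y) : Prop :=
  exists (I : Type) (A : I -> X -> Prop),
    (forall i, functionally_closed tX (A i)) /\ sigma_sfd tX A /\ base_for tY A f.

Definition Baire1 {X Y : Type} (tX : topology X) (tY : topology Y)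
  (f : X -> Y) : Prop :=
  exists fn : nat -> X -> Y,
    (forall n, continuous tX tY (fn n)) /\
    forall x V, open tY V -> V (f x) -> exists N, forall n, (N <= n)%nat -> V (fn n x).

Definition is_metric {Y : Type} (d : Y -> Y -> R) : Prop :=
  (forall x y, 0 <= d x y) /\ (forall x y, d x y = 0 <-> x = y) /\
  (forall x y, d x y = d y x) /\ (forall x y z, d x z <= d x y + d y z).

Definition metrizable {Y : Type} (tY : topology Y) : Prop :=
  exists d : Y -> Y -> R, is_metric d /\
    forall U, open tY U <->
      (forall y, U y -> exists eps, 0 < eps /\ forall z, d y z < eps -> U z).

Definition connected {Y : Type} (tY : topology Y) : Prop :=
  forall U V, open tY U -> open tY V ->
    (forall y, U y \/ V y) -> (forall y, ~ (U y /\ V y)) ->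
    (exists y, U y) -> (exists y, V y) -> False.

(* arc: continuous injective map of [0,1] into Y (Y Hausdorff here, so this is
   a homeomorphic embedding); continuity w.r.t. the subspace topology of [0,1] *)
Definition is_arc {Y : Type} (tY : topology Y) (g : R -> Y) : Prop :=
  (forall t, 0 <= t <= 1 -> forall V, open tY V -> V (g t) ->
     exists delta, 0 < delta /\
       forall s, 0 <= s <= 1 -> Rabs (s - t) < delta -> V (g s)) /\
  (forall s t, 0 <= s <= 1 -> 0 <= t <= 1 -> g s = g t -> s = t).

Definition arcwise_connected_set {Y : Type} (tY : topology Y) (V : Y -> Prop) : Prop :=
  forall a b, V a -> V b -> a <> b ->
    exists g : R -> Y, is_arc tY g /\ g 0 = a /\ g 1 = b /\
      forall t, 0 <= t <= 1 -> V (g t).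

Definition locally_arcwise_connected {Y : Type} (tY : topology Y) : Prop :=
  forall y U, open tY U -> U y ->
    exists V, open tY V /\ V y /\ subset V U /\ arcwise_connected_set tY V.

From Stdlib Require Import Reals Lra Lia List Classical ClassicalEpsilon
  FunctionalExtensionality PropExtensionality.
Open Scope R_scope.

(* Fix a metric d on Y.  Being connected and locally arcwise connected, Y is path
   connected, and near each point any two close points are joined by a path that stays
   close.

   Split the base (A_i) of f into the strongly functionally discrete layers J_m, with
   discrete neighbourhoods U_{m,p}.  For a precision level l every x lies in some A_i
   whose f-image has diameter < 1/(l+1); the least layer containing such an i gives a
   selected member, and the selected members at the levels 0, ..., D-1 form the trail
   of x, a node of the tree of finite sequences of members.  For each N we build
   continuous weights on nodes with values in [0,1] such that near every point at most
   one node of each length has positive weight, and positive weight at a node forces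
   weight 1 at its parent; so every x has a unique deepest node of positive weight.
   Each node n carries a point of f over its cell and a path to it from the point of
   its parent whose distance from that point exceeds the optimum by at most
   1/(|n|+1); f_N(x) is the point of the path of the deepest node at x at the
   parameter given by its weight.  Local uniqueness of nodes makes f_N continuous.
   The weights of the trail of x tend to 1, so eventually f_N(x) lies on the path of
   an extension of a long trail, and all points of such a path are close to f(x). *)

Lemma open_ext {X} (t : topology X) (P Q : X -> Prop) :
  open t P -> (forall x, P x <-> Q x) -> open t Q.
Proof.
  intros HP E. replace Q with P; auto.
  apply functional_extensionality; intro; apply propositional_extensionality; auto.
Qed.

Lemma open_of_local {X} (t : topology X) (P : X -> Prop) :
  (forall x, P x -> exists W, open t W /\ W x /\ forall z, W z -> P z) -> open t P.
Proof.
  intros H.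
  apply (open_ext t (fun x => exists W, (open t W /\ forall z, W z -> P z) /\ W x)).
  - apply open_union. intros W [HW _]; exact HW.
  - intro x; split.
    + intros [W [[_ HW] Wx]]; auto.
    + intros Px. destruct (H x Px) as [W [? [? ?]]]. exists W; auto.
Qed.

Lemma nbhd_forall_lt {X} (t : topology X) (x : X) (Q : nat -> (X -> Prop) -> Prop) (n : nat) :
  (forall k, (k < n)%nat -> exists W, open t W /\ W x /\ Q k W) ->
  exists W, open t W /\ W x /\
    forall k, (k < n)%nat -> exists W', Q k W' /\ forall z, W z -> W' z.
Proof.
  induction n as [|n IH]; intros H.
  - exists (fun _ => True). split; [apply open_full|]. split; auto. intros; lia.
  - destruct IH as [W [HW [Wx HWQ]]]. { intros k Hk; apply H; lia. }
    destruct (H n ltac:(lia)) as [W' [HW' [W'x HQ]]].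
    exists (fun z => W z /\ W' z). split; [apply open_inter; auto|]. split; auto.
    intros k Hk. destruct (Nat.eq_dec k n) as [->|Hne].
    + exists W'; split; auto. intros z [_ ?]; auto.
    + destruct (HWQ k ltac:(lia)) as [W'' [? HW'']]. exists W''; split; auto.
      intros z [? _]; auto.
Qed.

Lemma dependent_choice {A : Type} {B : A -> Type} (P : forall a, B a -> Prop) :
  (forall a, exists b, P a b) -> exists F : forall a, B a, forall a, P a (F a).
Proof.
  intros H. exists (fun a => proj1_sig (constructive_indefinite_description _ (H a))).
  intro a. exact (proj2_sig (constructive_indefinite_description _ (H a))).
Qed.

Lemma least_nat_exists (P : nat -> Prop) :
  (exists n, P n) -> exists n, P n /\ forall k, (k < n)%nat -> ~ P k.
Proof.
  intros [n Hn]. induction n as [n IH] using (well_founded_induction Wf_nat.lt_wf).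
  destruct (classic (exists k, (k < n)%nat /\ P k)) as [[k [Hk Pk]]|Hno].
  - exact (IH k Hk Pk).
  - exists n; split; auto. intros k Hk Pk; apply Hno; eauto.
Qed.

Lemma eventually_forall_lt (m : nat) (P : nat -> nat -> Prop) :
  (forall k, (k < m)%nat -> exists N0, forall N, (N0 <= N)%nat -> P k N) ->
  exists N0, forall N, (N0 <= N)%nat -> forall k, (k < m)%nat -> P k N.
Proof.
  induction m as [|m IH]; intros H.
  - exists O; intros; lia.
  - destruct IH as [N1 H1]. { intros k Hk; apply H; lia. }
    destruct (H m ltac:(lia)) as [N2 H2].
    exists (N1 + N2)%nat. intros N HN k Hk.
    destruct (Nat.eq_dec k m) as [->|]; [apply H2; lia|apply H1; lia].
Qed.

Lemma INR_archimedean r : exists N, r < INR N.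
Proof. destruct (INR_archimed 1 r ltac:(lra)) as [n Hn]. exists n; lra. Qed.

Lemma Rmult_pos_factors a b : 0 <= a -> 0 <= b -> 0 < a * b -> 0 < a /\ 0 < b.
Proof.
  intros Ha Hb H. split; destruct (Rle_lt_dec a 0); destruct (Rle_lt_dec b 0); auto; nra.
Qed.

Section ContinuousR.
Variables (X : Type) (tX : topology X).

Lemma continuous_R_const c : continuous_R tX (fun _ => c).
Proof.
  intros x eps Heps. exists (fun _ => True). split; [apply open_full|]. split; auto.
  intros. rewrite Rminus_diag, Rabs_R0; auto.
Qed.

Lemma continuous_R_lipschitz_comp (u : X -> R) (F : R -> R) (L : R) :
  continuous_R tX u -> 0 <= L -> (forall a b, Rabs (F a - F b) <= L * Rabs (a - b)) ->
  continuous_R tX (fun x => F (u x)).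
Proof.
  intros Hu HL HF x eps Heps.
  destruct (Hu x (eps / (L + 1))) as [W [HW [Wx HWu]]].
  { apply Rdiv_lt_0_compat; lra. }
  exists W; split; auto; split; auto. intros y Wy.
  eapply Rle_lt_trans; [apply HF|].
  apply Rle_lt_trans with ((L + 1) * Rabs (u y - u x)).
  { apply Rmult_le_compat_r; [apply Rabs_pos|lra]. }
  apply Rlt_le_trans with ((L + 1) * (eps / (L + 1))).
  { apply Rmult_lt_compat_l; [lra|auto]. }
  right; field; lra.
Qed.

Lemma continuous_R_mul_unit (u v : X -> R) :
  continuous_R tX u -> continuous_R tX v ->
  (forall x, 0 <= u x <= 1) -> (forall x, 0 <= v x <= 1) ->
  continuous_R tX (fun x => u x * v x).
Proof.
  intros Hu Hv Bu Bv x eps Heps.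
  destruct (Hu x (eps/2)) as [W1 [HW1 [W1x H1]]]; [lra|].
  destruct (Hv x (eps/2)) as [W2 [HW2 [W2x H2]]]; [lra|].
  exists (fun z => W1 z /\ W2 z). split; [apply open_inter; auto|]. split; auto.
  intros y [Y1 Y2]. specialize (H1 y Y1). specialize (H2 y Y2).
  replace (u y * v y - u x * v x) with ((u y - u x) * v y + u x * (v y - v x)) by ring.
  eapply Rle_lt_trans; [apply Rabs_triang|]. rewrite !Rabs_mult.
  rewrite (Rabs_pos_eq (v y)), (Rabs_pos_eq (u x)) by apply Bv || apply Bu.
  pose proof (Bu x); pose proof (Bv y).
  pose proof (Rabs_pos (u y - u x)); pose proof (Rabs_pos (v y - v x)). nra.
Qed.

Lemma continuous_R_local (F : X -> R) :
  (forall x, exists W, open tX W /\ W x /\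
     exists G, continuous_R tX G /\ forall z, W z -> F z = G z) ->
  continuous_R tX F.
Proof.
  intros H x eps Heps. destruct (H x) as [W [HW [Wx [G [HG HFG]]]]].
  destruct (HG x eps Heps) as [W' [HW' [W'x HW'G]]].
  exists (fun z => W z /\ W' z). split; [apply open_inter; auto|]. split; auto.
  intros y [Wy W'y]. rewrite (HFG y Wy), (HFG x Wx). auto.
Qed.

End ContinuousR.

Lemma continuous_R_ext {X} (tX : topology X) (u v : X -> R) :
  continuous_R tX u -> (forall x, u x = v x) -> continuous_R tX v.
Proof. intros Hu E. replace v with u; auto. apply functional_extensionality; auto. Qed.

Definition clamp (t : R) := Rmin 1 (Rmax 0 t).

Lemma clamp_bounds t : 0 <= clamp t <= 1.
Proof. unfold clamp, Rmin, Rmax. repeat destruct Rle_dec; lra. Qed.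

Lemma clamp_pos t : 0 < clamp t -> 0 < t.
Proof. unfold clamp, Rmin, Rmax. repeat destruct Rle_dec; lra. Qed.

Lemma clamp_1 t : 1 <= t -> clamp t = 1.
Proof. unfold clamp, Rmin, Rmax. repeat destruct Rle_dec; lra. Qed.

Lemma clamp_0 t : t <= 0 -> clamp t = 0.
Proof. unfold clamp, Rmin, Rmax. repeat destruct Rle_dec; lra. Qed.

Lemma clamp_affine_lipschitz a c s t :
  Rabs (clamp (a * s + c) - clamp (a * t + c)) <= Rabs a * Rabs (s - t).
Proof.
  rewrite <- Rabs_mult. replace (a * (s - t)) with (a * s + c - (a * t + c)) by ring.
  generalize (a * s + c) (a * t + c). intros u v.
  unfold clamp, Rmin, Rmax.
  repeat destruct Rle_dec; unfold Rabs; repeat destruct Rcase_abs; lra.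
Qed.

Lemma continuous_R_clamp_affine {X} (tX : topology X) (u : X -> R) a c :
  continuous_R tX u -> continuous_R tX (fun x => clamp (a * u x + c)).
Proof.
  intros Hu. apply (continuous_R_lipschitz_comp X tX u (fun t => clamp (a * t + c)) (Rabs a));
    auto using Rabs_pos, clamp_affine_lipschitz.
Qed.

(* [ramp_top N] rises from 0 at [1 - 1/N] to 1 at 1; [ramp_off N] falls from 1 at
   [1 - 3/N] to 0 at [1 - 2/N]; [ramp_level e] rises from 0 at [1 - 1/(e+1)] to 1
   at [1 - 1/(e+2)], so the supports of the [ramp_level e] are nested. *)
Definition ramp_top (N : nat) (t : R) := clamp (1 - INR N * (1 - t)).
Definition ramp_off (N : nat) (t : R) := clamp (INR N * (1 - t) - 2).
Definition ramp_level (e : nat) (t : R) :=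
  clamp ((t - (1 - / (INR e + 1))) * ((INR e + 1) * (INR e + 2))).

Lemma continuous_R_ramp_top {X} (tX : topology X) N u :
  continuous_R tX u -> continuous_R tX (fun x => ramp_top N (u x)).
Proof.
  intros Hu. apply (continuous_R_ext tX _ _ (continuous_R_clamp_affine tX u (INR N) (1 - INR N) Hu)).
  intro; unfold ramp_top; f_equal; ring.
Qed.

Lemma continuous_R_ramp_off {X} (tX : topology X) N u :
  continuous_R tX u -> continuous_R tX (fun x => ramp_off N (u x)).
Proof.
  intros Hu. apply (continuous_R_ext tX _ _ (continuous_R_clamp_affine tX u (- INR N) (INR N - 2) Hu)).
  intro; unfold ramp_off; f_equal; ring.
Qed.

Lemma continuous_R_ramp_level {X} (tX : topology X) e u :
  continuous_R tX u -> continuous_R tX (fun x => ramp_level e (u x)).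
Proof.
  intros Hu. set (k := (INR e + 1) * (INR e + 2)).
  apply (continuous_R_ext tX _ _ (continuous_R_clamp_affine tX u k (- (1 - / (INR e + 1)) * k) Hu)).
  intro; unfold ramp_level; fold k; f_equal; ring.
Qed.

Lemma ramp_top_1 N : ramp_top N 1 = 1.
Proof. unfold ramp_top. apply clamp_1. lra. Qed.

Lemma ramp_top_pos N t : (0 < N)%nat -> 0 < ramp_top N t -> 1 - / INR N < t.
Proof.
  intros HN H. apply clamp_pos in H. assert (0 < INR N) by (apply lt_0_INR; lia).
  assert (1 - t < / INR N); [|lra].
  apply Rmult_lt_reg_l with (INR N); auto. rewrite Rinv_r; lra.
Qed.

Lemma ramp_off_pos N t : (0 < N)%nat -> 0 < ramp_off N t -> t < 1 - 2 * / INR N.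
Proof.
  intros HN H. apply clamp_pos in H. assert (0 < INR N) by (apply lt_0_INR; lia).
  assert (2 * / INR N < 1 - t); [|lra].
  apply Rmult_lt_reg_l with (INR N); auto.
  rewrite <- Rmult_assoc, (Rmult_comm (INR N) 2), Rmult_assoc, Rinv_r; lra.
Qed.

Lemma ramp_off_1 N t c : 0 < c -> t <= 1 - c -> 3 <= INR N * c -> ramp_off N t = 1.
Proof. intros Hc Ht HN. unfold ramp_off. apply clamp_1. pose proof (pos_INR N). nra. Qed.

Lemma ramp_level_1 e : ramp_level e 1 = 1.
Proof.
  unfold ramp_level. apply clamp_1. pose proof (pos_INR e).
  replace ((1 - (1 - / (INR e + 1))) * ((INR e + 1) * (INR e + 2))) with (INR e + 2)
    by (field; lra).
  lra.
Qed.

Lemma ramp_level_pos e t : 0 < ramp_level e t -> 1 - / (INR e + 1) < t.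
Proof.
  intro H. apply clamp_pos in H. pose proof (pos_INR e).
  assert (0 < (INR e + 1) * (INR e + 2)) by nra.
  destruct (Rle_dec t (1 - / (INR e + 1))); [|lra].
  assert ((t - (1 - / (INR e + 1))) * ((INR e + 1) * (INR e + 2)) <= 0); [nra|lra].
Qed.

Lemma ramp_level_pos_0 e t : 0 < ramp_level e t -> 0 < t.
Proof.
  intro H; apply ramp_level_pos in H. pose proof (pos_INR e).
  assert (/ (INR e + 1) <= 1); [|lra].
  rewrite <- Rinv_1. apply Rinv_le_contravar; lra.
Qed.

Lemma ramp_level_nest e t : 0 < ramp_level (S e) t -> ramp_level e t = 1.
Proof.
  intro H. apply ramp_level_pos in H. rewrite S_INR in H. unfold ramp_level. apply clamp_1.
  pose proof (pos_INR e). set (a := INR e) in *.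
  assert (Hp : 0 < (a + 1) * (a + 2)) by nra.
  apply Rle_trans with ((/ (a + 1) - / (a + 1 + 1)) * ((a + 1) * (a + 2))).
  - right; field; lra.
  - apply Rmult_le_compat_r; lra.
Qed.

(** * Paths in a metric space *)

Section Metric.
Variables (Y : Type) (d : Y -> Y -> R).
Hypothesis Hd : is_metric d.

Lemma metric_refl x : d x x = 0. Proof. apply Hd; auto. Qed.
Lemma metric_sym x y : d x y = d y x. Proof. apply Hd. Qed.
Lemma metric_triangle x y z : d x z <= d x y + d y z. Proof. apply Hd. Qed.

(* paths are parametrised by [0,1]; values outside it are irrelevant *)
Definition is_path (g : R -> Y) := forall t, 0 <= t <= 1 -> forall eps, 0 < eps ->
  exists del, 0 < del /\
    forall s, 0 <= s <= 1 -> Rabs (s - t) < del -> d (g t) (g s) < eps.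

Definition joins (g : R -> Y) (a b : Y) := is_path g /\ g 0 = a /\ g 1 = b.

Lemma is_path_const a : is_path (fun _ => a).
Proof. intros t Ht eps He. exists 1; split; [lra|]. intros. rewrite metric_refl; auto. Qed.

Definition path_rev (g : R -> Y) := fun t => g (1 - t).

Lemma joins_rev g a b : joins g a b -> joins (path_rev g) b a.
Proof.
  intros [Hg [Ha Hb]]. unfold path_rev. split; [|split].
  2: rewrite Rminus_0_r; auto.
  2: rewrite Rminus_diag; auto.
  intros t Ht eps He. destruct (Hg (1 - t) ltac:(lra) eps He) as [del [Hdel H]].
  exists del; split; auto. intros s Hs Hst. apply H; [lra|].
  replace (1 - s - (1 - t)) with (- (s - t)) by ring. rewrite Rabs_Ropp; auto.
Qed.

Definition path_concat (g1 g2 : R -> Y) := fun t =>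
  if Rle_dec t (1/2) then g1 (2 * t) else g2 (2 * t - 1).

Lemma is_path_concat g1 g2 : is_path g1 -> is_path g2 -> g1 1 = g2 0 ->
  is_path (path_concat g1 g2).
Proof.
  intros H1 H2 E t Ht eps He. unfold path_concat.
  destruct (Rtotal_order t (1/2)) as [Hlt|[->|Hgt]].
  - destruct (H1 (2*t) ltac:(lra) eps He) as [d1 [Hd1 K1]].
    exists (Rmin (d1/2) (1/2 - t)). split; [apply Rmin_glb_lt; lra|].
    intros s Hs Hst. pose proof (Rmin_l (d1/2) (1/2 - t)). pose proof (Rmin_r (d1/2) (1/2 - t)).
    apply Rabs_def2 in Hst.
    destruct Rle_dec; destruct Rle_dec; try lra.
    apply K1; [lra|]. apply Rabs_def1; lra.
  - destruct (H1 1 ltac:(lra) eps He) as [d1 [Hd1 K1]].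
    destruct (H2 0 ltac:(lra) eps He) as [d2 [Hd2 K2]].
    exists (Rmin d1 d2 / 2). split; [apply Rdiv_lt_0_compat; [apply Rmin_glb_lt|]; lra|].
    intros s Hs Hst. pose proof (Rmin_l d1 d2). pose proof (Rmin_r d1 d2).
    apply Rabs_def2 in Hst.
    destruct Rle_dec as [_|]; [|lra]. replace (2 * (1/2)) with 1 by field.
    destruct Rle_dec.
    + apply K1; [lra|]. apply Rabs_def1; lra.
    + rewrite E. apply K2; [lra|]. apply Rabs_def1; lra.
  - destruct (H2 (2*t - 1) ltac:(lra) eps He) as [d2 [Hd2 K2]].
    exists (Rmin (d2/2) (t - 1/2)). split; [apply Rmin_glb_lt; lra|].
    intros s Hs Hst. pose proof (Rmin_l (d2/2) (t - 1/2)). pose proof (Rmin_r (d2/2) (t - 1/2)).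
    apply Rabs_def2 in Hst.
    destruct Rle_dec; destruct Rle_dec; try lra.
    apply K2; [lra|]. apply Rabs_def1; lra.
Qed.

Lemma joins_concat g1 g2 a b c : joins g1 a b -> joins g2 b c -> joins (path_concat g1 g2) a c.
Proof.
  intros [H1 [Ha Hb]] [H2 [Hb' Hc]]. split; [apply is_path_concat; [auto|auto|congruence]|].
  unfold path_concat. split.
  - destruct Rle_dec; [rewrite Rmult_0_r; auto|lra].
  - destruct Rle_dec; [lra|]. replace (2 * 1 - 1) with 1 by ring; auto.
Qed.

Definition path_within (a : Y) (g : R -> Y) (r : R) :=
  forall t, 0 <= t <= 1 -> d a (g t) <= r.

Definition near_optimal_path (a b : Y) (eta : R) (g : R -> Y) :=
  joins g a b /\ forall g' r, joins g' a b -> path_within a g' r -> path_within a g (r + eta).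

Lemma near_optimal_path_exists a b eta : 0 < eta -> (exists g, joins g a b) ->
  exists g, near_optimal_path a b eta g.
Proof.
  intros Heta [g0 Hg0].
  destruct (classic (exists r g, joins g a b /\ path_within a g r)) as [Hex|Hno].
  2:{ exists g0. split; auto. intros g' r ? ?. exfalso; apply Hno; eauto. }
  set (E := fun u => exists r g, u = - r /\ joins g a b /\ path_within a g r).
  assert (Hb : bound E).
  { exists 0. intros u [r [g [-> [[_ [Ha _]] Hw]]]].
    specialize (Hw 0 ltac:(lra)). rewrite Ha, metric_refl in Hw. lra. }
  assert (Hn : exists u, E u).
  { destruct Hex as [r [g Hg]]. exists (- r), r, g; auto. }
  destruct (completeness E Hb Hn) as [m [Hub Hlub]].
  assert (exists u, E u /\ m - eta < u) as [u [[r [g [-> [Hg Hw]]]] Hu]].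
  { apply NNPP; intro Hc. assert (m <= m - eta); [|lra].
    apply Hlub. intros u Eu. destruct (Rle_dec u (m - eta)); auto.
    exfalso; apply Hc; exists u; split; auto; lra. }
  exists g. split; auto.
  intros g' r' Hg' Hw' t Ht.
  assert (- r' <= m) by (apply Hub; exists r', g'; auto).
  specialize (Hw t Ht). lra.
Qed.

Definition optimal_path (a b : Y) (eta : R) : R -> Y :=
  match excluded_middle_informative (exists g, near_optimal_path a b eta g) with
  | left H => proj1_sig (constructive_indefinite_description _ H)
  | right _ => fun _ => a
  end.

Lemma optimal_path_spec a b eta : 0 < eta -> (exists g, joins g a b) ->
  near_optimal_path a b eta (optimal_path a b eta).
Proof.
  intros He Hp. unfold optimal_path. destruct excluded_middle_informative as [H|H].
  - exact (proj2_sig (constructive_indefinite_description _ H)).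
  - exfalso; apply H, near_optimal_path_exists; auto.
Qed.

Lemma near_optimal_path_close a b eta g y r g' :
  near_optimal_path a b eta g -> joins g' a b ->
  (forall t, 0 <= t <= 1 -> d y (g' t) < r) ->
  forall t, 0 <= t <= 1 -> d y (g t) <= 2 * d y a + r + eta.
Proof.
  intros [_ Hopt] Hg' Hr t Ht.
  assert (Hw : path_within a g' (d y a + r)).
  { intros u Hu. pose proof (metric_triangle a y (g' u)). rewrite (metric_sym a y) in *.
    specialize (Hr u Hu). lra. }
  pose proof (Hopt g' _ Hg' Hw t Ht). pose proof (metric_triangle y a (g t)). lra.
Qed.

Variable tY : topology Y.
Hypothesis HdY : forall U, open tY U <->
  (forall y, U y -> exists eps, 0 < eps /\ forall z, d y z < eps -> U z).

Lemma ball_open y r : open tY (fun z => d y z < r).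
Proof.
  apply HdY. intros z Hz. exists (r - d y z). split; [lra|].
  intros w Hw. pose proof (metric_triangle y z w). lra.
Qed.

Lemma arc_is_path g : is_arc tY g -> is_path g.
Proof.
  intros [Hc _] t Ht eps He.
  destruct (Hc t Ht (fun z => d (g t) z < eps) (ball_open _ _)) as [del [Hdel H]].
  { rewrite metric_refl; auto. }
  exists del; split; auto.
Qed.

Lemma joins_in_arcwise_connected V a b : arcwise_connected_set tY V -> V a -> V b ->
  exists g, joins g a b /\ forall t, 0 <= t <= 1 -> V (g t).
Proof.
  intros HV Va Vb. destruct (classic (a = b)) as [<-|Hne].
  - exists (fun _ => a). repeat split; auto. apply is_path_const.
  - destruct (HV a b Va Vb Hne) as [g [Ha [E0 [E1 Hin]]]].
    exists g; repeat split; auto. apply arc_is_path; auto.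
Qed.

Hypothesis Hl : locally_arcwise_connected tY.

Lemma locally_small_paths y eps : 0 < eps -> exists del, 0 < del /\
  forall a b, d y a < del -> d y b < del ->
    exists g, joins g a b /\ forall t, 0 <= t <= 1 -> d y (g t) < eps.
Proof.
  intros He.
  destruct (Hl y (fun z => d y z < eps) (ball_open _ _)) as [V [HV [Vy [Hsub Harc]]]].
  { rewrite metric_refl; auto. }
  destruct (proj1 (HdY V) HV y Vy) as [del [Hdel Hball]].
  exists del; split; auto. intros a b Ha Hb.
  destruct (joins_in_arcwise_connected V a b Harc (Hball a Ha) (Hball b Hb)) as [g [Hg Hin]].
  exists g; split; auto.
Qed.

Hypothesis Hc : connected tY.

Lemma path_connected a b : exists g, joins g a b.
Proof.
  set (S := fun z => exists g, joins g a z).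
  assert (Hnear : forall z, exists del, 0 < del /\ forall w, d z w < del -> exists g, joins g z w).
  { intro z. destruct (locally_small_paths z 1 ltac:(lra)) as [del [Hdel H]].
    exists del; split; auto. intros w Hw.
    destruct (H z w) as [g [Hg _]]; [rewrite metric_refl|..]; eauto. }
  apply NNPP; intro Hb. change (~ S b) in Hb.
  apply (Hc S (fun z => ~ S z)).
  - apply HdY. intros z [g Hg]. destruct (Hnear z) as [del [Hdel H]].
    exists del; split; auto. intros w Hw. destruct (H w Hw) as [g' Hg'].
    exists (path_concat g g'). eapply joins_concat; eauto.
  - apply HdY. intros z Hz. destruct (Hnear z) as [del [Hdel H]].
    exists del; split; auto. intros w Hw [g Hg]. destruct (H w Hw) as [g' Hg'].
    apply Hz. exists (path_concat g (path_rev g')). eapply joins_concat; [eauto|].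
    apply joins_rev; auto.
  - intros y; apply classic.
  - intros y [? ?]; auto.
  - exists a, (fun _ => a). repeat split; auto. apply is_path_const.
  - exists b; auto.
Qed.

End Metric.

(** * Weights on the tree of selected members *)

Section Construction.
Variables (X Y : Type) (tX : topology X) (d : Y -> Y -> R).
Hypothesis Hd : is_metric d.
Variables (f : X -> Y) (I : Type) (A : I -> X -> Prop) (J : nat -> I -> Prop).
Variable U : forall m, {i | J m i} -> X -> Prop.
Hypothesis U_discrete : forall m, discrete_family tX (U m).
Hypothesis A_sub_U : forall m p x, A (proj1_sig p) x -> U m p x.
Variable g : I -> X -> R.
Hypothesis g_cont : forall i, continuous_R tX (g i).
Hypothesis g_bounds : forall i x, 0 <= g i x <= 1.
Hypothesis g_zero : forall i x, A i x <-> g i x = 0.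
Variable h : forall m, {i | J m i} -> X -> R.
Hypothesis h_cont : forall m p, continuous_R tX (h m p).
Hypothesis h_bounds : forall m p x, 0 <= h m p x <= 1.
Hypothesis h_nonzero : forall m p x, U m p x <-> h m p x <> 0.

Definition small_image (l : nat) (i : I) :=
  forall u v, A i u -> A i v -> d (f u) (f v) < / (INR l + 1).

Lemma layer_member_unique m p q x : U m p x -> U m q x -> p = q.
Proof. intros Hp Hq. destruct (U_discrete m x) as [W [_ [Wx HW]]]. apply HW; eauto. Qed.

Definition bump (N : nat) m (p : {i | J m i}) x :=
  clamp (INR N * h m p x) * (1 - g (proj1_sig p) x).

Lemma bump_bounds N m p x : 0 <= bump N m p x <= 1.
Proof.
  unfold bump. pose proof (clamp_bounds (INR N * h m p x)). pose proof (g_bounds (proj1_sig p) x).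
  nra.
Qed.

Lemma continuous_R_bump N m p : continuous_R tX (bump N m p).
Proof.
  apply continuous_R_mul_unit.
  - apply (continuous_R_ext tX _ _ (continuous_R_clamp_affine tX (h m p) (INR N) 0 (h_cont m p))).
    intro; f_equal; ring.
  - apply (continuous_R_lipschitz_comp _ tX (g (proj1_sig p)) (fun t => 1 - t) 1); [auto|lra|].
    intros a b. replace (1 - a - (1 - b)) with (- (a - b)) by ring. rewrite Rabs_Ropp; lra.
  - intro; apply clamp_bounds.
  - intro x. pose proof (g_bounds (proj1_sig p) x); lra.
Qed.

Lemma bump_pos N m p x : 0 < bump N m p x -> U m p x.
Proof.
  unfold bump; intro H. apply h_nonzero. intro E. rewrite E, Rmult_0_r, clamp_0 in H; lra.
Qed.

Lemma bump_out N m p x : ~ U m p x -> bump N m p x = 0.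
Proof.
  intro H. pose proof (bump_bounds N m p x). destruct (Rle_lt_dec (bump N m p x) 0); [lra|].
  exfalso; eauto using bump_pos.
Qed.

Lemma bump_le N m p x : bump N m p x <= 1 - g (proj1_sig p) x.
Proof.
  unfold bump. pose proof (clamp_bounds (INR N * h m p x)). pose proof (g_bounds (proj1_sig p) x).
  nra.
Qed.

Lemma bump_1 N m p x : A (proj1_sig p) x -> 1 <= INR N * h m p x -> bump N m p x = 1.
Proof.
  intros HA Hn. unfold bump. rewrite clamp_1, (proj1 (g_zero _ x) HA) by auto. ring.
Qed.

(* by discreteness of the layer, at most one [p] qualifies *)
Definition layer_bump (N l m : nat) (x : X) : R :=
  match excluded_middle_informative
    (exists p : {i | J m i}, U m p x /\ small_image l (proj1_sig p)) with
  | left H => bump N m (proj1_sig (constructive_indefinite_description _ H)) x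
  | right _ => 0
  end.

Lemma layer_bump_eq N l m p x :
  U m p x -> small_image l (proj1_sig p) -> layer_bump N l m x = bump N m p x.
Proof.
  intros Hu Hs. unfold layer_bump. destruct excluded_middle_informative as [H|H].
  - destruct (constructive_indefinite_description _ H) as [q Hq]; simpl.
    destruct Hq as [Hq _].
    rewrite (layer_member_unique m q p x); auto.
  - exfalso; eauto.
Qed.

Lemma layer_bump_0 N l m x :
  (forall p : {i | J m i}, small_image l (proj1_sig p) -> ~ U m p x) -> layer_bump N l m x = 0.
Proof.
  intros H. unfold layer_bump. destruct excluded_middle_informative as [[p [Hp Hs]]|]; auto.
  exfalso; eapply H; eauto.
Qed.

Lemma continuous_R_layer_bump N l m : continuous_R tX (layer_bump N l m).
Proof.
  apply continuous_R_local. intro x. destruct (U_discrete m x) as [W [HW [Wx HWd]]].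
  exists W; split; auto; split; auto.
  destruct (classic (exists p : {i | J m i},
      small_image l (proj1_sig p) /\ exists z, W z /\ U m p z)) as [[p [Hs Hz]]|Hno].
  - exists (bump N m p). split; [apply continuous_R_bump|]. intros z Wz.
    destruct (classic (U m p z)) as [Hu|Hu].
    + apply layer_bump_eq; auto.
    + rewrite bump_out by auto. apply layer_bump_0. intros q Hq Hqz.
      assert (q = p) as -> by (apply HWd; eauto). auto.
  - exists (fun _ => 0). split; [apply continuous_R_const|]. intros z Wz.
    apply layer_bump_0. intros q Hq Hqz. apply Hno; eauto.
Qed.

Fixpoint layers_clear (N l m : nat) (x : X) : R :=
  match m with
  | O => 1
  | S m' => layers_clear N l m' x * ramp_off N (layer_bump N l m' x)
  end.

Lemma layers_clear_bounds N l m x : 0 <= layers_clear N l m x <= 1.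
Proof.
  induction m; simpl; [lra|]. pose proof (clamp_bounds (INR N * (1 - layer_bump N l m x) - 2)).
  unfold ramp_off. nra.
Qed.

Lemma continuous_R_layers_clear N l m : continuous_R tX (layers_clear N l m).
Proof.
  induction m; simpl; [apply continuous_R_const|].
  apply continuous_R_mul_unit; auto.
  - apply continuous_R_ramp_off, continuous_R_layer_bump.
  - intro; apply layers_clear_bounds.
  - intro; apply clamp_bounds.
Qed.

Lemma layers_clear_pos N l m x : 0 < layers_clear N l m x ->
  forall m', (m' < m)%nat -> 0 < ramp_off N (layer_bump N l m' x).
Proof.
  induction m; simpl; intros H m' Hm'; [lia|].
  apply Rmult_pos_factors in H as [H1 H2]; [|apply layers_clear_bounds|apply clamp_bounds].
  destruct (Nat.eq_dec m' m) as [->|]; auto. apply IHm; auto; lia.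
Qed.

Lemma layers_clear_1 N l m x :
  (forall m', (m' < m)%nat -> ramp_off N (layer_bump N l m' x) = 1) -> layers_clear N l m x = 1.
Proof.
  induction m; simpl; intros H; auto. rewrite IHm, H by (auto; intros; apply H; lia). ring.
Qed.

Definition member := {m : nat & {i | J m i}}.

(* For fixed [N] only the levels [l < N] and layers [m <= N] are used, so finitely many
   neighbourhood conditions suffice and nodes are at most [N] deep. *)
Definition member_weight (N l : nat) (s : member) (x : X) : R :=
  if excluded_middle_informative
    ((l < N)%nat /\ (projT1 s <= N)%nat /\ small_image l (proj1_sig (projT2 s)))
  then ramp_top N (bump N (projT1 s) (projT2 s) x) * layers_clear N l (projT1 s) x
  else 0.

Lemma continuous_R_member_weight N l s : continuous_R tX (member_weight N l s).
Proof.
  unfold member_weight. destruct excluded_middle_informative; [|apply continuous_R_const].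
  apply continuous_R_mul_unit.
  - apply continuous_R_ramp_top, continuous_R_bump.
  - apply continuous_R_layers_clear.
  - intro; apply clamp_bounds.
  - intro; apply layers_clear_bounds.
Qed.

Lemma member_weight_pos N l s x : 0 < member_weight N l s x ->
  (l < N)%nat /\ (projT1 s <= N)%nat /\ small_image l (proj1_sig (projT2 s)) /\
  1 - / INR N < bump N (projT1 s) (projT2 s) x /\ 0 < layers_clear N l (projT1 s) x.
Proof.
  unfold member_weight. destruct excluded_middle_informative as [[Hl [Hm Hs]]|]; [|lra].
  intro H. apply Rmult_pos_factors in H as [H1 H2];
    [|apply clamp_bounds|apply layers_clear_bounds].
  repeat split; auto. apply ramp_top_pos; auto; lia.
Qed.

Lemma member_weight_pos_U N l s x : 0 < member_weight N l s x -> U (projT1 s) (projT2 s) x.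
Proof.
  intro H. apply member_weight_pos in H as [HN [_ [_ [Hb _]]]]. apply (bump_pos N).
  assert (/ INR N <= 1); [|lra].
  rewrite <- Rinv_1. apply Rinv_le_contravar; [lra|]. apply (le_INR 1); lia.
Qed.

Lemma member_weight_pos_layer_lt N l m1 p1 m2 p2 z1 z2 :
  (m1 < m2)%nat ->
  0 < member_weight N l (existT _ m1 p1) z1 -> 0 < member_weight N l (existT _ m2 p2) z2 ->
  layer_bump N l m1 z2 + / INR N < layer_bump N l m1 z1.
Proof.
  intros Hlt S1 S2.
  rewrite (layer_bump_eq N l m1 p1 z1 (member_weight_pos_U N l _ z1 S1))
    by (apply member_weight_pos in S1; tauto).
  apply member_weight_pos in S1 as [HN [_ [_ [Hp1 _]]]].
  apply member_weight_pos in S2 as [_ [_ [_ [_ He2]]]]. simpl in *.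
  pose proof (ramp_off_pos N _ ltac:(lia) (layers_clear_pos N l m2 z2 He2 m1 Hlt)). lra.
Qed.

Lemma member_weight_discrete N l x : exists W, open tX W /\ W x /\ forall s1 s2 : member,
  (exists z, W z /\ 0 < member_weight N l s1 z) ->
  (exists z, W z /\ 0 < member_weight N l s2 z) -> s1 = s2.
Proof.
  destruct (Nat.eq_dec N 0) as [->|HN].
  { exists (fun _ => True). split; [apply open_full|]. split; auto.
    intros s1 s2 [z [_ Hz]]. apply member_weight_pos in Hz. lia. }
  assert (Hr : 0 < / INR N / 2).
  { assert (0 < INR N) by (apply lt_0_INR; lia).
    apply Rdiv_lt_0_compat; [apply Rinv_0_lt_compat|]; lra. }
  destruct (nbhd_forall_lt tX x (fun k W =>
     (forall p q, (exists z, W z /\ U k p z) -> (exists z, W z /\ U k q z) -> p = q) /\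
     (forall z, W z -> Rabs (layer_bump N l k z - layer_bump N l k x) < / INR N / 2)) (S N))
    as [W [HW [Wx HQ]]].
  { intros k _. destruct (U_discrete k x) as [W1 [HW1 [W1x H1]]].
    destruct (continuous_R_layer_bump N l k x _ Hr) as [W2 [HW2 [W2x H2]]].
    exists (fun z => W1 z /\ W2 z). split; [apply open_inter; auto|]. split; auto.
    split.
    - intros p q [z1 [[? ?] ?]] [z2 [[? ?] ?]]. apply H1; eauto.
    - intros z [_ ?]; auto. }
  exists W. split; auto. split; auto.
  assert (Hlayer : forall m1 p1 m2 p2 z1 z2, (m1 < m2 <= N)%nat -> W z1 -> W z2 ->
    0 < member_weight N l (existT _ m1 p1) z1 ->
    0 < member_weight N l (existT _ m2 p2) z2 -> False).
  { intros m1 p1 m2 p2 z1 z2 Hlt W1 W2 S1 S2.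
    destruct (HQ m1 ltac:(lia)) as [W' [[_ Hc] HWW']].
    pose proof (member_weight_pos_layer_lt N l m1 p1 m2 p2 z1 z2 ltac:(lia) S1 S2).
    pose proof (Rabs_def2 _ _ (Hc z1 (HWW' z1 W1))).
    pose proof (Rabs_def2 _ _ (Hc z2 (HWW' z2 W2))). lra. }
  intros [m1 p1] [m2 p2] [z1 [W1 S1]] [z2 [W2 S2]].
  pose proof (member_weight_pos N l _ z1 S1) as [_ [Hm1 _]].
  pose proof (member_weight_pos N l _ z2 S2) as [_ [Hm2 _]]. simpl in *.
  destruct (Compare_dec.lt_eq_lt_dec m1 m2) as [[Hlt|<-]|Hgt].
  - exfalso; apply (Hlayer m1 p1 m2 p2 z1 z2); auto.
  - f_equal. destruct (HQ m1 ltac:(lia)) as [W' [[Hd' _] HWW']].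
    apply Hd'; [exists z1|exists z2]; split; auto;
      [apply (member_weight_pos_U N l _ z1 S1)|apply (member_weight_pos_U N l _ z2 S2)].
  - exfalso; apply (Hlayer m2 p2 m1 p1 z2 z1); auto.
Qed.

(* A node of length [k] lists one member for each level [k-1, ..., 0], deepest first;
   its weight tests the members with [ramp_level k], so positive weight at a node
   forces weight 1 at its parent. *)
Definition node := list member.

Fixpoint weight_prod (N e : nat) (n : node) (x : X) : R :=
  match n with
  | nil => 1
  | s :: n' => ramp_level e (member_weight N (length n') s x) * weight_prod N e n' x
  end.

Definition node_weight N (n : node) x := weight_prod N (length n) n x.

Lemma weight_prod_bounds N e n x : 0 <= weight_prod N e n x <= 1.
Proof.
  induction n as [|s n IH]; simpl; [lra|].
  pose proof (clamp_bounds ((member_weight N (length n) s x - (1 - / (INR e + 1))) *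
     ((INR e + 1) * (INR e + 2)))). unfold ramp_level. nra.
Qed.

Lemma continuous_R_weight_prod N e n : continuous_R tX (weight_prod N e n).
Proof.
  induction n as [|s n IH]; simpl; [apply continuous_R_const|].
  apply continuous_R_mul_unit; auto.
  - apply continuous_R_ramp_level, continuous_R_member_weight.
  - intro; apply clamp_bounds.
  - intro; apply weight_prod_bounds.
Qed.

Lemma weight_prod_pos_cons N e s n x : 0 < weight_prod N e (s :: n) x ->
  0 < member_weight N (length n) s x /\ 0 < weight_prod N e n x.
Proof.
  simpl; intro H. apply Rmult_pos_factors in H as [H1 H2];
    [|apply clamp_bounds|apply weight_prod_bounds].
  split; auto. eapply ramp_level_pos_0; eauto.
Qed.

Lemma weight_prod_nest N e n x : 0 < weight_prod N (S e) n x -> weight_prod N e n x = 1.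
Proof.
  induction n as [|s n IH]; simpl; intro H; auto.
  apply Rmult_pos_factors in H as [H1 H2]; [|apply clamp_bounds|apply weight_prod_bounds].
  rewrite (ramp_level_nest e _ H1), IH; auto; ring.
Qed.

Lemma node_weight_bounds N n x : 0 <= node_weight N n x <= 1.
Proof. apply weight_prod_bounds. Qed.

Lemma continuous_R_node_weight N n : continuous_R tX (node_weight N n).
Proof. apply continuous_R_weight_prod. Qed.

Lemma node_weight_parent N s n x : 0 < node_weight N (s :: n) x -> node_weight N n x = 1.
Proof.
  unfold node_weight; simpl. intro H.
  apply Rmult_pos_factors in H as [_ H]; [|apply clamp_bounds|apply weight_prod_bounds].
  apply weight_prod_nest; auto.
Qed.

Lemma node_weight_suffix N r n x : 0 < node_weight N (r ++ n) x -> 0 < node_weight N n x.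
Proof.
  induction r as [|s r IH]; simpl; auto. intro H.
  apply IH. rewrite (node_weight_parent N s (r ++ n) x H). lra.
Qed.

Lemma node_weight_long N n x : (N < length n)%nat -> node_weight N n x = 0.
Proof.
  intro H. destruct n as [|s n]; simpl in H; [lia|].
  pose proof (node_weight_bounds N (s :: n) x).
  destruct (Rle_lt_dec (node_weight N (s :: n) x) 0) as [|Hp]; [lra|].
  apply weight_prod_pos_cons in Hp as [Hp _]. apply member_weight_pos in Hp. lia.
Qed.

Lemma node_weight_discrete N x : exists W, open tX W /\ W x /\
  forall n1 n2 : node, length n1 = length n2 ->
    (exists z, W z /\ 0 < node_weight N n1 z) ->
    (exists z, W z /\ 0 < node_weight N n2 z) -> n1 = n2.
Proof.
  destruct (nbhd_forall_lt tX x (fun k W => forall s1 s2 : member,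
    (exists z, W z /\ 0 < member_weight N k s1 z) ->
    (exists z, W z /\ 0 < member_weight N k s2 z) -> s1 = s2) N) as [W [HW [Wx HQ]]].
  { intros k _. apply member_weight_discrete. }
  exists W; split; auto; split; auto.
  assert (Hgen : forall n1 n2 e1 e2, length n1 = length n2 ->
    (exists z, W z /\ 0 < weight_prod N e1 n1 z) ->
    (exists z, W z /\ 0 < weight_prod N e2 n2 z) -> n1 = n2).
  { induction n1 as [|s1 n1 IH]; intros [|s2 n2] e1 e2 Hl H1 H2; simpl in Hl; try lia; auto.
    destruct H1 as [z1 [W1 P1]]. destruct H2 as [z2 [W2 P2]].
    apply weight_prod_pos_cons in P1 as [S1 P1]. apply weight_prod_pos_cons in P2 as [S2 P2].
    assert (Hlt : (length n1 < N)%nat) by (apply member_weight_pos in S1; tauto).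
    destruct (HQ (length n1) Hlt) as [W' [HQ' HWW]].
    f_equal.
    - apply HQ'; [exists z1|exists z2]; split; auto.
      replace (length n1) with (length n2) by lia; auto.
    - apply (IH n2 e1 e2); [lia| exists z1 | exists z2]; auto. }
  intros n1 n2 Hl H1 H2. apply (Hgen n1 n2 (length n1) (length n2)); auto.
Qed.

Lemma node_weight_unique N x n1 n2 :
  length n1 = length n2 -> 0 < node_weight N n1 x -> 0 < node_weight N n2 x -> n1 = n2.
Proof.
  intros Hl H1 H2. destruct (node_weight_discrete N x) as [W [_ [Wx HW]]]. apply HW; eauto.
Qed.

Lemma node_weight_pos_extends N x n n2 :
  0 < node_weight N n x -> 0 < node_weight N n2 x -> (length n <= length n2)%nat ->
  exists r, n2 = r ++ n.
Proof.
  intros H1 H2 Hl. set (k := (length n2 - length n)%nat).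
  exists (firstn k n2).
  assert (E : n2 = firstn k n2 ++ skipn k n2) by (symmetry; apply firstn_skipn).
  assert (Hs : skipn k n2 = n).
  { apply (node_weight_unique N x); auto.
    - rewrite length_skipn. unfold k; lia.
    - apply (node_weight_suffix N (firstn k n2)). rewrite <- E; auto. }
  rewrite Hs in E; auto.
Qed.

Definition deepest N n x := 0 < node_weight N n x /\ forall s, ~ 0 < node_weight N (s :: n) x.

Lemma deepest_exists N x : exists n, deepest N n x.
Proof.
  apply NNPP; intro Hno.
  assert (Hk : forall k, exists n, length n = k /\ 0 < node_weight N n x).
  { induction k as [|k [n [Hl Hp]]].
    - exists nil; split; auto. unfold node_weight; simpl; lra.
    - destruct (classic (exists s, 0 < node_weight N (s :: n) x)) as [[s Hs]|Hn].
      + exists (s :: n); split; simpl; auto.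
      + exfalso; apply Hno; exists n; split; auto. intros s Hs; apply Hn; eauto. }
  destruct (Hk (S N)) as [n [Hl Hp]]. rewrite node_weight_long in Hp; [lra|lia].
Qed.

Lemma deepest_of_longer N x n n2 :
  deepest N n x -> 0 < node_weight N n2 x -> (length n <= length n2)%nat -> n2 = n.
Proof.
  intros [H1 H3] H2 Hl. destruct (node_weight_pos_extends N x n n2 H1 H2 Hl) as [r ->].
  destruct r as [|s r] using rev_ind; auto.
  exfalso. apply (H3 s). rewrite <- app_assoc in H2. apply (node_weight_suffix N r); auto.
Qed.

Lemma deepest_unique N x n1 n2 : deepest N n1 x -> deepest N n2 x -> n1 = n2.
Proof.
  intros H1 H2. destruct (Nat.le_ge_cases (length n1) (length n2)).
  - symmetry. apply (deepest_of_longer N x n1 n2); auto. apply H2.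
  - apply (deepest_of_longer N x n2 n1); auto. apply H1.
Qed.

Lemma deepest_of_lt_1 N n x : 0 < node_weight N n x < 1 -> deepest N n x.
Proof.
  intros H. split; [tauto|]. intros s Hs. apply node_weight_parent in Hs. lra.
Qed.


(** * The approximating maps *)

Hypothesis Y_path_connected : forall a b : Y, exists gm, joins Y d gm a b.
Variable y0 : Y.

Definition selects (l : nat) (s : member) (x : X) :=
  A (proj1_sig (projT2 s)) x /\ small_image l (proj1_sig (projT2 s)) /\
  forall m', (m' < projT1 s)%nat ->
    forall p' : {i | J m' i}, small_image l (proj1_sig p') -> ~ A (proj1_sig p') x.

Fixpoint in_cell (n : node) (x : X) : Prop :=
  match n with
  | nil => True
  | s :: n' => selects (length n') s x /\ in_cell n' x
  end.

(* a point of [f] over the cell of [n], or that of its parent if the cell is empty *)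
Fixpoint node_point (n : node) : Y :=
  match n with
  | nil => y0
  | s :: n' =>
    match excluded_middle_informative (exists z, in_cell (s :: n') z) with
    | left H => f (proj1_sig (constructive_indefinite_description _ H))
    | right _ => node_point n'
    end
  end.

Definition node_tol (n : node) := / (INR (length n) + 1).

Definition node_path (n : node) : R -> Y :=
  match n with
  | nil => fun _ => y0
  | s :: n' => optimal_path Y d (node_point n') (node_point (s :: n')) (node_tol n')
  end.

Lemma node_path_spec s n :
  near_optimal_path Y d (node_point n) (node_point (s :: n)) (node_tol n) (node_path (s :: n)).
Proof.
  apply optimal_path_spec; auto.
  unfold node_tol. apply Rinv_0_lt_compat. pose proof (pos_INR (length n)); lra.
Qed.

Lemma node_path_is_path n : is_path Y d (node_path n).
Proof. destruct n as [|s n]; [apply is_path_const; auto|apply (node_path_spec s n)]. Qed.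

Lemma node_path_1 n : node_path n 1 = node_point n.
Proof. destruct n as [|s n]; auto. apply (node_path_spec s n). Qed.

Lemma node_path_0 s n : node_path (s :: n) 0 = node_point n.
Proof. apply (node_path_spec s n). Qed.

Definition approx (N : nat) (x : X) : Y :=
  let n := proj1_sig (constructive_indefinite_description _ (deepest_exists N x)) in
  node_path n (node_weight N n x).

Lemma approx_eq N n x : deepest N n x -> approx N x = node_path n (node_weight N n x).
Proof.
  intro H. unfold approx. destruct (constructive_indefinite_description _ _) as [n' Hn']; simpl.
  rewrite (deepest_unique N x n' n); auto.
Qed.

Lemma node_path_weight_near N n x eps r : 0 < eps -> 0 < r ->
  exists W, open tX W /\ W x /\ forall z, W z ->
    Rabs (node_weight N n z - node_weight N n x) < r /\
    d (node_path n (node_weight N n x)) (node_path n (node_weight N n z)) < eps.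
Proof.
  intros He Hr.
  destruct (node_path_is_path n (node_weight N n x) (node_weight_bounds N n x) eps He)
    as [del [Hdel Hpath]].
  destruct (continuous_R_node_weight N n x (Rmin del r)) as [W [HW [Wx Hw]]].
  { apply Rmin_glb_lt; auto. }
  exists W; split; [auto|split; [auto|]]. intros z Wz. specialize (Hw z Wz).
  pose proof (Rmin_l del r); pose proof (Rmin_r del r). split; [lra|].
  apply Hpath; [apply node_weight_bounds|lra].
Qed.

Lemma approx_near_of_weight_lt_1 N n x eps : deepest N n x -> node_weight N n x < 1 -> 0 < eps ->
  exists W, open tX W /\ W x /\ forall z, W z -> d (approx N x) (approx N z) < eps.
Proof.
  intros Hn Hlt He. pose proof (proj1 Hn) as Hpos.
  set (r := Rmin (node_weight N n x) (1 - node_weight N n x)).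
  assert (Hr : 0 < r /\ r <= node_weight N n x /\ r <= 1 - node_weight N n x).
  { split; [apply Rmin_glb_lt; lra|split; [apply Rmin_l|apply Rmin_r]]. }
  destruct (node_path_weight_near N n x eps r He) as [W [HW [Wx Hnear]]]; [lra|].
  exists W; split; auto; split; auto. intros z Wz.
  destruct (Hnear z Wz) as [Hw Hd']. apply Rabs_def2 in Hw.
  rewrite (approx_eq N n x Hn), (approx_eq N n z); auto.
  apply deepest_of_lt_1. lra.
Qed.

(* At weight 1 the deepest node may change, but only to the single child of [n] that
   is active near [x], whose path starts where that of [n] ends. *)
Lemma approx_near_of_weight_1 N n x eps : deepest N n x -> node_weight N n x = 1 -> 0 < eps ->
  exists W, open tX W /\ W x /\ forall z, W z -> d (approx N x) (approx N z) < eps.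
Proof.
  intros Hn Ht He. rewrite (approx_eq N n x Hn), Ht, node_path_1.
  destruct (node_weight_discrete N x) as [W0 [HW0 [W0x Hdisc]]].
  destruct (node_path_weight_near N n x eps (1/2) He ltac:(lra)) as [W1 [HW1 [W1x Hnear1]]].
  rewrite Ht, node_path_1 in Hnear1.
  assert (Hstay : forall z, W0 z -> W1 z -> (forall s, W0 z -> ~ 0 < node_weight N (s :: n) z) ->
            d (node_point n) (approx N z) < eps).
  { intros z Z0 Z1 Hno. destruct (Hnear1 z Z1) as [Hw Hd']. apply Rabs_def2 in Hw.
    rewrite (approx_eq N n z); auto. split; [lra|]. intro s; apply Hno; auto. }
  destruct (classic (exists s z', W0 z' /\ 0 < node_weight N (s :: n) z')) as [[s [z' Hz']]|Hno].
  - destruct (node_path_weight_near N (s :: n) x eps (1/2) He ltac:(lra)) as [W2 [HW2 [W2x Hnear2]]].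
    assert (Hc0 : node_weight N (s :: n) x = 0).
    { pose proof (node_weight_bounds N (s :: n) x). pose proof (proj2 Hn s). lra. }
    rewrite Hc0, node_path_0 in Hnear2.
    exists (fun z => W0 z /\ W1 z /\ W2 z).
    split; [repeat apply open_inter; auto|]. split; auto.
    intros z [Z0 [Z1 Z2]]. destruct (Hnear2 z Z2) as [Hw Hd']. apply Rabs_def2 in Hw.
    destruct (Rlt_le_dec 0 (node_weight N (s :: n) z)) as [Pc|Pc].
    + rewrite (approx_eq N (s :: n) z); auto. apply deepest_of_lt_1. lra.
    + apply Hstay; auto. intros s' _ Hs'.
      assert (s' :: n = s :: n) as [= ->] by (apply Hdisc; eauto). lra.
  - exists (fun z => W0 z /\ W1 z). split; [apply open_inter; auto|]. split; auto.
    intros z [Z0 Z1]. apply Hstay; auto. intros s _ Hs. apply Hno; eauto.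
Qed.

Lemma approx_continuous N x eps : 0 < eps ->
  exists W, open tX W /\ W x /\ forall z, W z -> d (approx N x) (approx N z) < eps.
Proof.
  intro He. destruct (deepest_exists N x) as [n Hn].
  destruct (Rlt_le_dec (node_weight N n x) 1) as [Hlt|Hge].
  - apply (approx_near_of_weight_lt_1 N n); auto.
  - apply (approx_near_of_weight_1 N n); auto. pose proof (node_weight_bounds N n x); lra.
Qed.


Hypothesis small_cover : forall x l, exists i, A i x /\ small_image l i.
Hypothesis layers_cover : forall i, exists m, J m i.
Hypothesis Y_locally_small_paths : forall y eps, 0 < eps -> exists del, 0 < del /\
  forall a b, d y a < del -> d y b < del ->
    exists g, joins Y d g a b /\ forall t, 0 <= t <= 1 -> d y (g t) < eps.

Lemma selects_exists x l : exists s, selects l s x.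
Proof.
  destruct (small_cover x l) as [i [Hi Hs]]. destruct (layers_cover i) as [m Hm].
  destruct (least_nat_exists (fun m =>
      exists p : {i | J m i}, small_image l (proj1_sig p) /\ A (proj1_sig p) x))
    as [m0 [[p [Hps Hpa]] Hmin]].
  { exists m, (exist _ i Hm); auto. }
  exists (existT _ m0 p). split; auto. split; auto. simpl.
  intros m' Hm' p' Hs' Ha'. apply (Hmin m' Hm'). eauto.
Qed.

Definition selected l x := proj1_sig (constructive_indefinite_description _ (selects_exists x l)).

Lemma selected_spec l x : selects l (selected l x) x.
Proof. exact (proj2_sig (constructive_indefinite_description _ (selects_exists x l))). Qed.

Fixpoint trail (D : nat) (x : X) : node :=
  match D with O => nil | S D' => selected D' x :: trail D' x end.

Lemma trail_length D x : length (trail D x) = D.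
Proof. induction D; simpl; auto. Qed.

Lemma in_cell_trail D x : in_cell (trail D x) x.
Proof. induction D; simpl; auto. rewrite trail_length. split; auto. apply selected_spec. Qed.

(* Layers before the selected one have no [l]-small member containing [x], so their
   bumps at [x] stay below 1 uniformly in [N]. *)
Lemma layer_bump_below_1 l s x m' : selects l s x -> (m' < projT1 s)%nat ->
  exists c, 0 < c /\ forall N, layer_bump N l m' x <= 1 - c.
Proof.
  intros [_ [_ Hmin]] Hm'.
  destruct (classic (exists p' : {i | J m' i}, U m' p' x /\ small_image l (proj1_sig p')))
    as [[p' [Hu' Hs']]|Hno].
  - exists (g (proj1_sig p') x). split.
    + pose proof (g_bounds (proj1_sig p') x).
      destruct (Rle_lt_dec (g (proj1_sig p') x) 0); auto.
      exfalso. apply (Hmin m' Hm' p' Hs'). apply g_zero; lra.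
    + intro N. rewrite (layer_bump_eq N l m' p' x Hu' Hs'). apply bump_le.
  - exists 1. split; [lra|]. intro N. rewrite layer_bump_0; [lra|].
    intros p' Hs' Hu'. apply Hno; eauto.
Qed.

Lemma member_weight_eventually_1 l s x : selects l s x ->
  exists N0, forall N, (N0 <= N)%nat -> member_weight N l s x = 1.
Proof.
  intros Hsel. destruct s as [m p]. destruct Hsel as [Ha [Hs Hmin]] eqn:E. simpl in *.
  assert (Hh : 0 < h m p x).
  { pose proof (h_bounds m p x). pose proof (proj1 (h_nonzero m p x) (A_sub_U m p x Ha)). lra. }
  destruct (INR_archimedean (/ h m p x)) as [N1 HN1].
  destruct (eventually_forall_lt m (fun k N => ramp_off N (layer_bump N l k x) = 1)) as [N2 HN2].
  { intros k Hk. destruct (layer_bump_below_1 l _ x k Hsel Hk) as [c [Hc Hle]].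
    destruct (INR_archimedean (3 / c)) as [N3 HN3]. exists N3. intros N HN.
    apply (ramp_off_1 N _ c Hc (Hle N)).
    assert (INR N3 <= INR N) by (apply le_INR; auto).
    assert (3 / c * c = 3) by (field; lra). nra. }
  exists (S l + m + N1 + N2)%nat. intros N HN. unfold member_weight. simpl.
  destruct excluded_middle_informative as [_|Hn]; [|exfalso; apply Hn; repeat split; auto; lia].
  rewrite layers_clear_1 by (intros; apply HN2; auto; lia).
  rewrite bump_1, ramp_top_1; auto; [ring|].
  assert (INR N1 <= INR N) by (apply le_INR; lia).
  assert (/ h m p x * h m p x = 1) by (field; lra). nra.
Qed.

Lemma node_weight_trail_eventually_1 D x :
  exists N0, forall N, (N0 <= N)%nat -> node_weight N (trail D x) x = 1.
Proof.
  destruct (eventually_forall_lt D (fun l N => member_weight N l (selected l x) x = 1)) as [N0 H].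
  { intros l _. apply member_weight_eventually_1, selected_spec. }
  exists N0. intros N HN. unfold node_weight. rewrite trail_length.
  assert (Hgen : forall D', (D' <= D)%nat -> weight_prod N D (trail D' x) x = 1).
  { induction D' as [|D' IH]; intros HD; simpl; auto.
    rewrite trail_length, H, IH, ramp_level_1; [ring|lia|auto|lia]. }
  apply Hgen; auto.
Qed.

Lemma in_cell_app r n z : in_cell (r ++ n) z -> in_cell n z.
Proof. induction r; simpl; auto. tauto. Qed.

Lemma node_point_in_cell r s n : (exists z, in_cell (s :: n) z) ->
  exists z, in_cell (s :: n) z /\ node_point (r ++ s :: n) = f z.
Proof.
  intros Hex. induction r as [|s' r IH]; simpl.
  - destruct excluded_middle_informative as [H|H]; [|contradiction].
    exists (proj1_sig (constructive_indefinite_description _ H)). split; auto.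
    exact (proj2_sig (constructive_indefinite_description _ H)).
  - destruct excluded_middle_informative as [H|H]; auto.
    exists (proj1_sig (constructive_indefinite_description _ H)). split; auto.
    exact (in_cell_app r (s :: n) _ (proj2 (proj2_sig (constructive_indefinite_description _ H)))).
Qed.

Lemma node_point_trail_close D x r :
  d (f x) (node_point (r ++ trail (S D) x)) < / (INR D + 1).
Proof.
  simpl. destruct (node_point_in_cell r (selected D x) (trail D x)) as [z [Hz ->]].
  { exists x. apply (in_cell_trail (S D)). }
  destruct Hz as [[Hz [Hs _]] _]. rewrite trail_length in *.
  apply Hs; [apply selected_spec|exact Hz].
Qed.

Lemma node_tol_le n D : (D <= length n)%nat -> node_tol n <= / (INR D + 1).
Proof.
  intro H. unfold node_tol. apply Rinv_le_contravar; [pose proof (pos_INR D); lra|].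
  apply le_INR in H. lra.
Qed.

(* Once the trail of [x] up to a level [D] has weight 1, [f_N(x)] lies on the path of
   an extension of that trail: its endpoints are close to [f(x)], hence by
   near-optimality so is the whole path. *)
Lemma approx_converges x eps : 0 < eps ->
  exists N0, forall N, (N0 <= N)%nat -> d (f x) (approx N x) < eps.
Proof.
  intro He.
  destruct (Y_locally_small_paths (f x) (eps/4) ltac:(lra)) as [del0 [Hdel0 Hpath]].
  assert (Hdel : 0 < Rmin del0 (eps / 4)) by (apply Rmin_glb_lt; lra).
  destruct (INR_archimedean (/ Rmin del0 (eps / 4))) as [D HD].
  assert (HDd : / (INR D + 1) < Rmin del0 (eps / 4)).
  { pose proof (pos_INR D). rewrite <- (Rinv_inv (Rmin del0 (eps / 4))).
    apply Rinv_lt_contravar; [apply Rmult_lt_0_compat; [apply Rinv_0_lt_compat|]|]; lra. }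
  pose proof (Rmin_l del0 (eps / 4)); pose proof (Rmin_r del0 (eps / 4)).
  pose proof (node_point_trail_close D x) as Hclose.
  destruct (node_weight_trail_eventually_1 (S D) x) as [N0 HN0].
  exists N0. intros N HN. specialize (HN0 N HN).
  destruct (deepest_exists N x) as [n Hn]. rewrite (approx_eq N n x Hn).
  destruct (Nat.le_gt_cases (length n) (length (trail (S D) x))) as [Hle|Hgt].
  - rewrite <- (deepest_of_longer N x n (trail (S D) x) Hn ltac:(lra) Hle), HN0, node_path_1.
    apply Rlt_trans with (/ (INR D + 1)); [exact (Hclose nil)|lra].
  - destruct (node_weight_pos_extends N x (trail (S D) x) n ltac:(lra) (proj1 Hn)
      (Nat.lt_le_incl _ _ Hgt)) as [[|s r] ->]; [simpl in Hgt; lia|].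
    pose proof (Hclose r) as Ha. pose proof (Hclose (s :: r)) as Hb. cbn [app] in Hb.
    destruct (Hpath (node_point (r ++ trail (S D) x)) (node_point (s :: r ++ trail (S D) x))
      ltac:(lra) ltac:(lra)) as [g' [Hg' Hg'near]].
    pose proof (near_optimal_path_close Y d Hd _ _ _ _ (f x) (eps / 4) g'
      (node_path_spec s (r ++ trail (S D) x)) Hg' Hg'near) as Hfar.
    pose proof (node_tol_le (r ++ trail (S D) x) D) as Htol.
    rewrite length_app, trail_length in Htol.
    pose proof (Htol ltac:(lia)).
    pose proof (Hfar _ (node_weight_bounds N (s :: r ++ trail (S D) x) x)). cbn [app]. lra.
Qed.


Variable tY : topology Y.
Hypothesis HdY : forall V, open tY V <->
  (forall y, V y -> exists eps, 0 < eps /\ forall z, d y z < eps -> V z).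

Lemma Baire1_approx : Baire1 tX tY f.
Proof.
  exists approx. split.
  - intros N V HV. apply open_of_local. intros x Vx.
    destruct (proj1 (HdY V) HV _ Vx) as [eps [He Heps]].
    destruct (approx_continuous N x eps He) as [W [HW [Wx HWc]]].
    exists W; repeat split; auto.
  - intros x V HV Vx.
    destruct (proj1 (HdY V) HV _ Vx) as [eps [He Heps]].
    destruct (approx_converges x eps He) as [N0 HN0].
    exists N0. intros n Hn. apply Heps, HN0, Hn.
Qed.

End Construction.

Lemma Baire1_of_empty {X Y} (tX : topology X) (tY : topology Y) (f : X -> Y) :
  ~ inhabited X -> Baire1 tX tY f.
Proof.
  intros HX. exists (fun _ => f). split.
  - intros n V HV. apply (open_ext tX (fun _ => True)); [apply open_full|].
    intro x; exfalso; apply HX; constructor; exact x.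
  - intros x; exfalso; apply HX; constructor; exact x.
Qed.

Lemma functionally_open_nonzero {X} (tX : topology X) (V : X -> Prop) :
  functionally_open tX V ->
  exists h, continuous_R tX h /\ (forall x, 0 <= h x <= 1) /\ (forall x, V x <-> h x <> 0).
Proof.
  intros [h [Hc [Hb Hz]]]. exists h. split; [auto|split; [auto|]]. intro x; split.
  - intros Vx E. apply (proj2 (Hz x) E Vx).
  - intros Hx. apply NNPP. intro Vx. apply Hx, Hz, Vx.
Qed.

Lemma closure_subset {X} (tX : topology X) (A : X -> Prop) : subset A (closure tX A).
Proof. intros x Ax W _ Wx. exists x; auto. Qed.

Lemma base_for_small_image {X Y} (tY : topology Y) (d : Y -> Y -> R) (Hd : is_metric d)
  (HdY : forall V, open tY V <->
     (forall y, V y -> exists eps, 0 < eps /\ forall z, d y z < eps -> V z))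
  (f : X -> Y) {I} (A : I -> X -> Prop) :
  base_for tY A f -> forall x l, exists i, A i x /\ small_image X Y d f I A l i.
Proof.
  intros Hbase x l. set (r := / (2 * (INR l + 1))).
  assert (Hr : 0 < r) by (unfold r; apply Rinv_0_lt_compat; pose proof (pos_INR l); lra).
  destruct (Hbase (fun z => d (f x) z < r) (ball_open Y d Hd tY HdY (f x) r)) as [K HK].
  destruct (proj1 (HK x)) as [i [Ki Ai]]. { rewrite metric_refl; auto. }
  exists i; split; auto. intros u v Au Av.
  assert (Hu : d (f x) (f u) < r) by (apply HK; eauto).
  assert (Hv : d (f x) (f v) < r) by (apply HK; eauto).
  pose proof (metric_triangle Y d Hd (f u) (f x) (f v)).
  rewrite (metric_sym Y d Hd (f u) (f x)) in *.
  assert (r + r = / (INR l + 1)) by (unfold r; field; pose proof (pos_INR l); lra). lra.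
Qed.

Theorem mainTheorem6 (X Y : Type) (tX : topology X) (tY : topology Y)
  (HYm : metrizable tY) (HYc : connected tY) (HYl : locally_arcwise_connected tY) :
  forall f : X -> Y, Sigma0fstar tX tY f -> Baire1 tX tY f.
Proof.
  intros f [I [A [HA [[J [HJ Hsfd]] Hbase]]]].
  destruct HYm as [d [Hd HdY]].
  destruct (classic (inhabited X)) as [[x0]|HX]; [|apply Baire1_of_empty; auto].
  destruct (dependent_choice _ Hsfd) as [U HU].
  destruct (dependent_choice _ HA) as [g Hg].
  destruct (dependent_choice (B := fun _ => X -> R) _
    (fun s : {m & {i | J m i}} => functionally_open_nonzero tX _ (proj1 (HU (projT1 s)) (projT2 s))))
    as [h Hh].
  apply (Baire1_approx X Y tX d Hd f I A J U (fun m => proj1 (proj2 (HU m)))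
    (fun m p x Ax => proj2 (proj2 (HU m)) p x (closure_subset tX _ x Ax))
    g (fun i => proj1 (Hg i)) (fun i => proj1 (proj2 (Hg i))) (fun i => proj2 (proj2 (Hg i)))
    (fun m p => h (existT _ m p)) (fun m p => proj1 (Hh _)) (fun m p => proj1 (proj2 (Hh _)))
    (fun m p => proj2 (proj2 (Hh (existT _ m p))))
    (path_connected Y d Hd tY HdY HYl HYc) (f x0)
    (base_for_small_image tY d Hd HdY f A Hbase) HJ
    (locally_small_paths Y d Hd tY HdY HYl) tY HdY).
Qed.
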